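(* Fix $M\ge1$, $L=\lfloor M/2\rfloor$ and complex constants $\alpha_1,\dots,\alpha_{L+1},\beta,\delta,\epsilon,\lambda_1,\dots,\lambda_M,\eta,\omega_1,\dots,\omega_L,\zeta$. Let $\mathcal A$ be a unital associative algebra over $\mathbb C$ with elements $b,b^\dagger$ and a unital algebra homomorphism $f\mapsto f(N)$ from the algebra of functions $\mathbb Z\to\mathbb C$ into $\mathcal A$ such that $f(N)b^\dagger=b^\dagger f(N+1)$ and $f(N)b=bf(N-1)$ for all $f$, and $b^\dagger b=\Phi(N)$, $bb^\dagger=\Phi(N+1)$ for some $\Phi:\mathbb Z\to\mathbb C$. For functions $A,h,\rho:\mathbb Z\to\mathbb C$ put $\Delta A(n)=A(n+1)-A(n)$ and $$\mathbf A=A(N),\quad \mathbf B=h(N)+b^\dagger\rho(N)+\rho(N)b,\quad \mathbf C=b^\dagger\Delta A(N)\rho(N)-\rho(N)\Delta A(N)b .$$ Then $[\mathbf A,\mathbf B]=\mathbf C$. If moreover for all $n\in\mathbb Z$: (q1) $(\Delta A(n))^2=\delta+\beta(A(n)+A(n+1))$; (q2) $\sum_{i=1}^{L+1}\alpha_iA(n)^i+\delta h(n)+\epsilon+2\beta A(n)h(n)=0$; (q3) $\Delta A(n)-\Delta A(n+1)=-\beta$; (q4) $\Delta A(n)(h(n+1)-h(n))=-\beta(h(n+1)+h(n))+\sum_{i=1}^{L}\omega_i(A(n+1)^i+A(n)^i)+\eta$; (q5) $2\Phi(n+1)\rho(n)^2\Delta A(n)-2\Phi(n)\rho(n-1)^2\Delta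 A(n-1)=\zeta+\sum_{i=1}^{M}\lambda_iA(n)^i-\beta h(n)^2-\beta(\rho(n-1)^2\Phi(n)+\rho(n)^2\Phi(n+1))+\eta h(n)+2\sum_{j=1}^{L}\omega_jA(n)^jh(n)$; then $[\mathbf A,\mathbf C]=\sum_{i=1}^{L+1}\alpha_i\mathbf A^i+\delta\mathbf B+\epsilon+\beta\{\mathbf A,\mathbf B\}$ and $[\mathbf B,\mathbf C]=\sum_{i=1}^{M}\lambda_i\mathbf A^i-\beta\mathbf B^2+\eta\mathbf B+\sum_{i=1}^{L}\omega_i\{\mathbf A^i,\mathbf B\}+\zeta$. Furthermore, (q1) and (q3) are satisfied by $A(n)=\sqrt\delta\,n+c_1$ when $\beta=0$ and by $A(n)=-\frac{\beta}{8}-\frac{\delta}{2\beta}+\frac{\beta}{2}(n+c_1)^2$ when $\beta\neq0$ (any constant $c_1$, any square root of $\delta$); and if $\delta+2\beta A(n)\ne0$ for all $n$, (q2) is satisfied by $h(n)=-\big(\sum_{i=1}^{L+1}\alpha_iA(n)^i+\epsilon\big)/(\delta+2\beta A(n))$, which for these $A$ equals $-4\big(\sum_{i=1}^{L+1}\alpha_iA(n)^i+\epsilon\big)/(4A'(n)^2-\beta^2)$, where $A'$ is the derivative of $A$ regarded as a polynomial in $n$.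
   Context: $[X,Y]=XY-YX$, $\{X,Y\}=XY+YX$; $f(N+1)$ denotes the image of $n\mapsto f(n+1)$. The function $h$ is the paper's function $b(N)$, renamed to avoid confusion with the element $b$. $\lfloor y\rfloor$ is the integer part. *)

From HB Require Import structures.
From mathcomp Require Import all_boot all_order all_algebra.
Set Implicit Arguments. Unset Strict Implicit. Unset Printing Implicit Defensive.
Import Order.TTheory GRing.Theory Num.Theory.
Local Open Scope ring_scope.

Definition comm {R : pzRingType} (x y : R) : R := x * y - y * x.
Definition acomm {R : pzRingType} (x y : R) : R := x * y + y * x.

Definition Dlt {V : zmodType} (A : int -> V) (n : int) : V := A (n + 1) - A n.

(* The data b, b^dagger, and the unital algebra homomorphism f |-> f(N)
   from the algebra of functions Z -> C into Alg, with the commutation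
   relations and b^dagger b = Phi(N), b b^dagger = Phi(N+1). *)
Record N_rep (C : numClosedFieldType) (Alg : algType C)
    (phi : (int -> C) -> Alg) (b bd : Alg) (Phi : int -> C) : Prop := {
  rep_one : phi (fun _ => 1) = 1;
  rep_add : forall f g, phi (fun n => f n + g n) = phi f + phi g;
  rep_scale : forall (c : C) f, phi (fun n => c * f n) = c *: phi f;
  rep_mul : forall f g, phi (fun n => f n * g n) = phi f * phi g;
  rep_bd : forall f, phi f * bd = bd * phi (fun n => f (n + 1));
  rep_b : forall f, phi f * b = b * phi (fun n => f (n - 1));
  rep_bdb : bd * b = phi Phi;
  rep_bbd : b * bd = phi (fun n => Phi (n + 1))
}.

Section Conds.
Variable C : numClosedFieldType.

Definition q1 (beta delta : C) (A : int -> C) : Prop :=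
  forall n, Dlt A n ^+ 2 = delta + beta * (A n + A (n + 1)).

(* (q2) ; L is floor(M/2), the sum runs over i = 1 .. L+1 *)
Definition q2 (L : nat) (alpha : nat -> C) (beta delta eps : C)
    (A h : int -> C) : Prop :=
  forall n, \sum_(1 <= i < L.+2) alpha i * A n ^+ i + delta * h n + eps
            + 2 * beta * A n * h n = 0.

Definition q3 (beta : C) (A : int -> C) : Prop :=
  forall n, Dlt A n - Dlt A (n + 1) = - beta.

Definition q4 (L : nat) (omega : nat -> C) (beta eta : C)
    (A h : int -> C) : Prop :=
  forall n, Dlt A n * (h (n + 1) - h n)
    = - beta * (h (n + 1) + h n)
      + \sum_(1 <= i < L.+1) omega i * (A (n + 1) ^+ i + A n ^+ i) + eta.

Definition q5 (M L : nat) (lambda omega : nat -> C) (beta eta zeta : C)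
    (A h rho Phi : int -> C) : Prop :=
  forall n, 2 * Phi (n + 1) * rho n ^+ 2 * Dlt A n
            - 2 * Phi n * rho (n - 1) ^+ 2 * Dlt A (n - 1)
    = zeta + \sum_(1 <= i < M.+1) lambda i * A n ^+ i - beta * h n ^+ 2
      - beta * (rho (n - 1) ^+ 2 * Phi n + rho n ^+ 2 * Phi (n + 1))
      + eta * h n + 2 * \sum_(1 <= j < L.+1) omega j * A n ^+ j * h n.

Definition hsol (L : nat) (alpha : nat -> C) (beta delta eps : C)
    (A : int -> C) (n : int) : C :=
  - (\sum_(1 <= i < L.+2) alpha i * A n ^+ i + eps) / (delta + 2 * beta * A n).

End Conds.

From HB Require Import structures.
From mathcomp Require Import all_boot all_order all_algebra ring.
From Stdlib Require Import FunctionalExtensionality.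
Set Implicit Arguments. Unset Strict Implicit. Unset Printing Implicit Defensive.
Import Order.TTheory GRing.Theory Num.Theory.
Local Open Scope ring_scope.

(* Every operator that occurs is a "normal form"
       f0(N) + b^dagger f1(N) + f2(N) b + (b^dagger)^2 f3(N) + f4(N) b^2
   with coefficient functions f0..f4 : Z -> C.  Normal forms are closed under
   sum, scaling, and, for normal forms of b-degree at most one, under product:
   pushing f(N) through b, b^dagger (shifting its argument) and collapsing
   b^dagger b, b b^dagger into Phi(N), Phi(N+1) gives an explicit product rule
   ([normal_form_mul]).  Each of the three commutation relations thus reduces
   to five scalar identities between the coefficient functions, which follow
   from (q1)-(q5) by ring normalisation after adding a suitable multiple of the
   relevant hypothesis ([eq_by_lincomb]).

   The explicit solutions of (q1),(q3) are checked by field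
   computations; for them 4 A'(n)^2 - beta^2 = 4 (delta + 2 beta A(n)), which
   turns the solution h of (q2) into the alternative formula. *)

Lemma eq_by_lincomb (R : comNzRingType) (k x y u v : R) :
  u = v -> x - y = k * (u - v) -> x = y.
Proof. by move=> -> e; apply/eqP; rewrite -subr_eq0 e subrr mulr0. Qed.
Arguments eq_by_lincomb {R} k {x y u v}.

Section NormalForms.
Variables (C : numClosedFieldType) (Alg : algType C) (phi : (int -> C) -> Alg)
  (b bd : Alg) (Phi : int -> C).
Hypothesis rep : N_rep phi b bd Phi.

Definition zerof : int -> C := fun _ => 0.

Lemma phi_ext f g : (forall n, f n = g n) -> phi f = phi g.
Proof. by move=> e; rewrite (functional_extensionality f g e). Qed.

Lemma phiD f g : phi (fun n => f n + g n) = phi f + phi g.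
Proof. exact: (rep_add rep). Qed.

Lemma phiM f g : phi f * phi g = phi (fun n => f n * g n).
Proof. by rewrite (rep_mul rep). Qed.

Lemma phiZ (c : C) f : c *: phi f = phi (fun n => c * f n).
Proof. by rewrite (rep_scale rep). Qed.

Lemma phi0 : phi zerof = 0.
Proof. by rewrite -(scale0r (phi zerof)) phiZ; apply: phi_ext => n; rewrite mul0r. Qed.

Lemma phiN f : - phi f = phi (fun n => - f n).
Proof. by rewrite -scaleN1r phiZ; apply: phi_ext => n; rewrite mulN1r. Qed.

Lemma phi_const (c : C) : c%:A = phi (fun _ => c).
Proof. by rewrite -(rep_one rep) phiZ; apply: phi_ext => n; rewrite mulr1. Qed.

Lemma phiX f i : phi f ^+ i = phi (fun n => f n ^+ i).
Proof.
elim: i => [|i IH]; first by rewrite expr0 -(rep_one rep); apply: phi_ext.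
by rewrite exprS IH phiM; apply: phi_ext => n; rewrite exprS.
Qed.

Lemma phi_sum_exp (r : seq nat) (c : nat -> C) f :
  \sum_(i <- r) c i *: phi f ^+ i = phi (fun n => \sum_(i <- r) c i * f n ^+ i).
Proof.
elim: r => [|x r IH]; first by rewrite big_nil -phi0; apply: phi_ext => n; rewrite big_nil.
by rewrite big_cons IH phiX phiZ -phiD; apply: phi_ext => n; rewrite big_cons.
Qed.

Lemma b_phi f : b * phi f = phi (fun n => f (n + 1)) * b.
Proof. by rewrite (rep_b rep); congr (_ * _); apply: phi_ext => n; rewrite addrK. Qed.

Lemma bd_phi_b f : bd * phi f * b = phi (fun n => Phi n * f (n - 1)).
Proof. by rewrite -mulrA (rep_b rep) mulrA (rep_bdb rep) phiM. Qed.

Lemma sum_acomm (r : seq nat) (c : nat -> C) (x y : Alg) :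
  \sum_(i <- r) c i *: acomm (x ^+ i) y = acomm (\sum_(i <- r) c i *: x ^+ i) y.
Proof.
rewrite /acomm mulr_suml mulr_sumr -big_split /=.
by apply: eq_bigr => i _; rewrite scalerDr scalerAl scalerAr.
Qed.

Definition normal_form f0 f1 f2 f3 f4 :=
  phi f0 + bd * phi f1 + phi f2 * b + bd * bd * phi f3 + phi f4 * b * b.

Lemma normal_form_ext f0 f1 f2 f3 f4 g0 g1 g2 g3 g4 :
  (forall n, f0 n = g0 n) -> (forall n, f1 n = g1 n) -> (forall n, f2 n = g2 n) ->
  (forall n, f3 n = g3 n) -> (forall n, f4 n = g4 n) ->
  normal_form f0 f1 f2 f3 f4 = normal_form g0 g1 g2 g3 g4.
Proof.
move=> e0 e1 e2 e3 e4.
by rewrite /normal_form (phi_ext e0) (phi_ext e1) (phi_ext e2) (phi_ext e3) (phi_ext e4).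
Qed.

Lemma normal_form_add f0 f1 f2 f3 f4 g0 g1 g2 g3 g4 :
  normal_form f0 f1 f2 f3 f4 + normal_form g0 g1 g2 g3 g4 =
  normal_form (fun n => f0 n + g0 n) (fun n => f1 n + g1 n) (fun n => f2 n + g2 n)
              (fun n => f3 n + g3 n) (fun n => f4 n + g4 n).
Proof.
rewrite /normal_form !phiD !mulrDr !mulrDl.
rewrite addrACA (addrACA (phi f0 + bd * phi f1 + phi f2 * b)).
by rewrite (addrACA (phi f0 + bd * phi f1)) (addrACA (phi f0)).
Qed.

Lemma normal_form_scale (c : C) f0 f1 f2 f3 f4 :
  c *: normal_form f0 f1 f2 f3 f4 =
  normal_form (fun n => c * f0 n) (fun n => c * f1 n) (fun n => c * f2 n)
              (fun n => c * f3 n) (fun n => c * f4 n).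
Proof.
rewrite /normal_form !scalerDr -!phiZ.
congr (_ + _ + _ + _ + _).
- exact: scalerAr.
- exact: scalerAl.
- exact: scalerAr.
- by rewrite !scalerAl.
Qed.

Lemma normal_form_sub f0 f1 f2 f3 f4 g0 g1 g2 g3 g4 :
  normal_form f0 f1 f2 f3 f4 - normal_form g0 g1 g2 g3 g4 =
  normal_form (fun n => f0 n - g0 n) (fun n => f1 n - g1 n) (fun n => f2 n - g2 n)
              (fun n => f3 n - g3 n) (fun n => f4 n - g4 n).
Proof.
rewrite -scaleN1r normal_form_scale normal_form_add.
by apply: normal_form_ext => n; ring.
Qed.

Lemma normal_form_deg1 f0 f1 f2 :
  normal_form f0 f1 f2 zerof zerof = phi f0 + bd * phi f1 + phi f2 * b.
Proof. by rewrite /normal_form phi0 ?mulr0 ?mul0r ?addr0. Qed.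

Lemma normal_form_phi f : phi f = normal_form f zerof zerof zerof zerof.
Proof. by rewrite normal_form_deg1 phi0 ?mulr0 ?mul0r ?addr0. Qed.

Lemma normal_form_C f1 f2 f3 f4 :
  bd * phi f1 * phi f2 - phi f3 * phi f4 * b =
  normal_form zerof (fun n => f1 n * f2 n) (fun n => - (f3 n * f4 n)) zerof zerof.
Proof. by rewrite normal_form_deg1 phi0 add0r -mulrA !phiM -mulNr phiN. Qed.

Lemma phi_mul_deg1 f g0 g1 g2 :
  phi f * normal_form g0 g1 g2 zerof zerof =
  normal_form (fun n => f n * g0 n) (fun n => f (n + 1) * g1 n)
              (fun n => f n * g2 n) zerof zerof.
Proof.
rewrite !normal_form_deg1 !mulrDr phiM mulrA (rep_bd rep) -mulrA phiM.
by rewrite mulrA phiM.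
Qed.

Lemma bd_phi_mul_deg1 f g0 g1 g2 :
  bd * phi f * normal_form g0 g1 g2 zerof zerof =
  normal_form (fun n => Phi n * (f (n - 1) * g2 (n - 1)))
              (fun n => f n * g0 n) zerof (fun n => f (n + 1) * g1 n) zerof.
Proof.
rewrite -mulrA phi_mul_deg1 !normal_form_deg1 !mulrDr !mulrA bd_phi_b.
by rewrite /normal_form phi0 !mul0r !addr0 addrC addrA.
Qed.

Lemma phi_b_mul_deg1 f g0 g1 g2 :
  phi f * b * normal_form g0 g1 g2 zerof zerof =
  normal_form (fun n => f n * Phi (n + 1) * g1 n) zerof
              (fun n => f n * g0 (n + 1)) zerof (fun n => f n * g2 (n + 1)).
Proof.
rewrite normal_form_deg1 !mulrDr -!mulrA b_phi (mulrA b bd) (rep_bbd rep).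
rewrite (mulrA b) b_phi /normal_form phi0 ?mulr0 ?mul0r ?addr0 !mulrA !phiM.
by rewrite (addrC (phi _ * b)).
Qed.

Lemma normal_form_mul f0 f1 f2 g0 g1 g2 :
  normal_form f0 f1 f2 zerof zerof * normal_form g0 g1 g2 zerof zerof =
  normal_form
    (fun n => f0 n * g0 n + Phi n * (f1 (n - 1) * g2 (n - 1)) + f2 n * Phi (n + 1) * g1 n)
    (fun n => f0 (n + 1) * g1 n + f1 n * g0 n)
    (fun n => f0 n * g2 n + f2 n * g0 (n + 1))
    (fun n => f1 (n + 1) * g1 n)
    (fun n => f2 n * g2 (n + 1)).
Proof.
rewrite {1}normal_form_deg1 !mulrDl phi_mul_deg1 bd_phi_mul_deg1 phi_b_mul_deg1.
by rewrite !normal_form_add; apply: normal_form_ext => n; rewrite /zerof; ring.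
Qed.

Let normalize := (normal_form_mul, normal_form_sub, normal_form_scale, normal_form_add).

Lemma comm_A_B A h rho :
  comm (phi A) (phi h + bd * phi rho + phi rho * b) =
  bd * phi (Dlt A) * phi rho - phi rho * phi (Dlt A) * b.
Proof.
rewrite normal_form_C -normal_form_deg1 (normal_form_phi A) /comm !normalize.
by apply: normal_form_ext => n; rewrite /zerof /Dlt; ring.
Qed.

Lemma comm_A_C (L : nat) alpha beta delta eps A h rho :
  q1 beta delta A -> q2 L alpha beta delta eps A h ->
  comm (phi A) (bd * phi (Dlt A) * phi rho - phi rho * phi (Dlt A) * b) =
  \sum_(1 <= i < L.+2) alpha i *: phi A ^+ i
  + delta *: (phi h + bd * phi rho + phi rho * b)
  + eps%:A + beta *: acomm (phi A) (phi h + bd * phi rho + phi rho * b).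
Proof.
move=> Q1 Q2.
rewrite normal_form_C -normal_form_deg1 phi_sum_exp phi_const.
rewrite !(normal_form_phi A) !(normal_form_phi (fun n => \sum_(_ <- _) _)).
rewrite (normal_form_phi (fun _ => eps)) /comm /acomm !normalize.
apply: normal_form_ext => n; rewrite /zerof.
- by apply: (eq_by_lincomb (-1) (Q2 n)); ring.
- by have := Q1 n; rewrite /Dlt => E; apply: (eq_by_lincomb (rho n) E); ring.
- by have := Q1 n; rewrite /Dlt => E; apply: (eq_by_lincomb (rho n) E); ring.
- ring.
- ring.
Qed.

Lemma sum_mulrDr (L : nat) (omega : nat -> C) (x y : C) :
  \sum_(1 <= i < L.+1) omega i * (x ^+ i + y ^+ i) =
  \sum_(1 <= i < L.+1) omega i * x ^+ i + \sum_(1 <= i < L.+1) omega i * y ^+ i.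
Proof. by rewrite -big_split; apply: eq_bigr => i _; rewrite mulrDr. Qed.

Lemma comm_B_C (M L : nat) lambda omega beta eta zeta A h rho :
  q3 beta A -> q4 L omega beta eta A h ->
  q5 M L lambda omega beta eta zeta A h rho Phi ->
  comm (phi h + bd * phi rho + phi rho * b)
       (bd * phi (Dlt A) * phi rho - phi rho * phi (Dlt A) * b) =
  \sum_(1 <= i < M.+1) lambda i *: phi A ^+ i
  - beta *: (phi h + bd * phi rho + phi rho * b) ^+ 2
  + eta *: (phi h + bd * phi rho + phi rho * b)
  + \sum_(1 <= i < L.+1) omega i *: acomm (phi A ^+ i) (phi h + bd * phi rho + phi rho * b)
  + zeta%:A.
Proof.
move=> Q3 Q4 Q5.
rewrite normal_form_C -normal_form_deg1 sum_acomm !phi_sum_exp phi_const.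
rewrite !(normal_form_phi (fun n => \sum_(_ <- _) _)) (normal_form_phi (fun _ => zeta)).
rewrite expr2 /comm /acomm !normalize.
apply: normal_form_ext => n; rewrite /zerof.
- by have := Q5 n; rewrite -mulr_suml => E; apply: (eq_by_lincomb 1 E); ring.
- by have := Q4 n; rewrite sum_mulrDr => E; apply: (eq_by_lincomb (rho n) E); ring.
- by have := Q4 n; rewrite sum_mulrDr => E; apply: (eq_by_lincomb (rho n) E); ring.
- by apply: (eq_by_lincomb (rho n * rho (n + 1)) (Q3 n)); ring.
- by apply: (eq_by_lincomb (rho n * rho (n + 1)) (Q3 n)); ring.
Qed.

End NormalForms.

Section ExplicitSolutions.
Variable C : numClosedFieldType.

Definition lin_sol (s c1 : C) (n : int) : C := s * n%:~R + c1.
Definition lin_poly (s c1 : C) : {poly C} := s *: 'X + c1%:P.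

Definition quad_sol (beta delta c1 : C) (n : int) : C :=
  - (beta / 8) - delta / (2 * beta) + beta / 2 * (n%:~R + c1) ^+ 2.
Definition quad_poly (beta delta c1 : C) : {poly C} :=
  (- (beta / 8) - delta / (2 * beta))%:P + (beta / 2) *: ('X + c1%:P) ^+ 2.

Lemma lin_sol_q1_q3 (delta s c1 : C) :
  s ^+ 2 = delta -> q1 0 delta (lin_sol s c1) /\ q3 0 (lin_sol s c1).
Proof.
move=> hs; split=> n; rewrite /Dlt /lin_sol !intrD mulr1z; last ring.
by rewrite -hs; ring.
Qed.

Lemma quad_sol_q1_q3 (beta delta c1 : C) :
  beta != 0 -> q1 beta delta (quad_sol beta delta c1) /\ q3 beta (quad_sol beta delta c1).
Proof. by move=> beta_neq0; split=> n; rewrite /Dlt /quad_sol !intrD mulr1z; field. Qed.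

Lemma hsol_q2 (L : nat) alpha (beta delta eps : C) (A : int -> C) :
  (forall n, delta + 2 * beta * A n != 0) ->
  q2 L alpha beta delta eps A (hsol L alpha beta delta eps A).
Proof. by move=> hA n; rewrite /hsol; field; apply: hA. Qed.

Lemma hsol_scaled (L : nat) alpha (beta delta eps : C) (A : int -> C) n (d : C) :
  delta + 2 * beta * A n != 0 -> d = 4 * (delta + 2 * beta * A n) ->
  hsol L alpha beta delta eps A n
  = - 4 * (\sum_(1 <= i < L.+2) alpha i * A n ^+ i + eps) / d.
Proof. by move=> hA ->; rewrite /hsol; field. Qed.

Lemma lin_poly_deriv (delta s c1 : C) (n : int) :
  s ^+ 2 = delta ->
  4 * ((lin_poly s c1)^`()).[n%:~R] ^+ 2 - 0 ^+ 2
  = 4 * (delta + 2 * 0 * lin_sol s c1 n).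
Proof.
move=> hs; rewrite /lin_poly derivD derivZ derivX derivC addr0 hornerZ hornerC.
by rewrite -hs; ring.
Qed.

Lemma quad_poly_deriv (beta delta c1 : C) (n : int) :
  beta != 0 ->
  4 * ((quad_poly beta delta c1)^`()).[n%:~R] ^+ 2 - beta ^+ 2
  = 4 * (delta + 2 * beta * quad_sol beta delta c1 n).
Proof.
move=> beta_neq0; rewrite /quad_poly /quad_sol !derivCE.
rewrite !(hornerD, hornerZ, hornerX, hornerC, hornerM, hornerMn).
by field.
Qed.

End ExplicitSolutions.

Theorem proposition7 (C : numClosedFieldType) (M : nat) (hM : (1 <= M)%N)
  (alpha lambda omega : nat -> C) (beta delta eps eta zeta : C)
  (Alg : algType C) (phi : (int -> C) -> Alg) (b bd : Alg)
  (Phi A h rho : int -> C) :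
  N_rep phi b bd Phi ->
  let L := M./2 in
  let Aop := phi A in
  let Bop := phi h + bd * phi rho + phi rho * b in
  let Cop := bd * phi (Dlt A) * phi rho - phi rho * phi (Dlt A) * b in
  (* [A,B] = C *)
  comm Aop Bop = Cop /\
  (* the algebra relations under (q1)-(q5) *)
  (q1 beta delta A -> q2 L alpha beta delta eps A h -> q3 beta A ->
   q4 L omega beta eta A h -> q5 M L lambda omega beta eta zeta A h rho Phi ->
   comm Aop Cop = \sum_(1 <= i < L.+2) alpha i *: Aop ^+ i + delta *: Bop
                  + eps%:A + beta *: acomm Aop Bop
   /\ comm Bop Cop = \sum_(1 <= i < M.+1) lambda i *: Aop ^+ i
                  - beta *: Bop ^+ 2 + eta *: Bop
                  + \sum_(1 <= i < L.+1) omega i *: acomm (Aop ^+ i) Bop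
                  + zeta%:A) /\
  (* (q1),(q3) solution for beta = 0 *)
  (beta = 0 -> forall s c1 : C, s ^+ 2 = delta ->
     let A1 := fun n : int => s * n%:~R + c1 in
     q1 beta delta A1 /\ q3 beta A1) /\
  (* (q1),(q3) solution for beta <> 0 *)
  (beta != 0 -> forall c1 : C,
     let A2 := fun n : int =>
       - (beta / 8) - delta / (2 * beta) + beta / 2 * (n%:~R + c1) ^+ 2 in
     q1 beta delta A2 /\ q3 beta A2) /\
  (* (q2) solution, for any A' with delta + 2 beta A'(n) <> 0 *)
  (forall A' : int -> C, (forall n, delta + 2 * beta * A' n != 0) ->
     q2 L alpha beta delta eps A' (hsol L alpha beta delta eps A')) /\
  (* alternative formula, A' = derivative of A regarded as polynomial in n *)
  (beta = 0 -> forall s c1 : C, s ^+ 2 = delta ->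
     let P : {poly C} := s *: 'X + c1%:P in
     let A1 := fun n : int => s * n%:~R + c1 in
     (forall n, delta + 2 * beta * A1 n != 0) ->
     forall n, hsol L alpha beta delta eps A1 n
       = - 4 * (\sum_(1 <= i < L.+2) alpha i * A1 n ^+ i + eps)
         / (4 * (P^`()).[n%:~R] ^+ 2 - beta ^+ 2)) /\
  (beta != 0 -> forall c1 : C,
     let P : {poly C} := (- (beta / 8) - delta / (2 * beta))%:P
                         + (beta / 2) *: ('X + c1%:P) ^+ 2 in
     let A2 := fun n : int =>
       - (beta / 8) - delta / (2 * beta) + beta / 2 * (n%:~R + c1) ^+ 2 in
     (forall n, delta + 2 * beta * A2 n != 0) ->
     forall n, hsol L alpha beta delta eps A2 n
       = - 4 * (\sum_(1 <= i < L.+2) alpha i * A2 n ^+ i + eps)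
         / (4 * (P^`()).[n%:~R] ^+ 2 - beta ^+ 2)).
Proof.
move=> rep L Aop Bop Cop.
split; first exact: (comm_A_B rep).
split.
  move=> Q1 Q2 Q3 Q4 Q5; split; first exact: (comm_A_C rep).
  exact: (comm_B_C rep).
split; first by move=> -> s c1 hs; exact: lin_sol_q1_q3.
split; first by move=> beta_neq0 c1; exact: quad_sol_q1_q3.
split; first exact: hsol_q2.
split.
  move=> -> s c1 hs P A1 hA n.
  by apply: hsol_scaled; [exact: hA | exact: lin_poly_deriv].
move=> beta_neq0 c1 P A2 hA n.
by apply: hsol_scaled; [exact: hA | exact: quad_poly_deriv].
Qed.
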